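(* Consider a tree power network $(\mathcal{V},\mathcal{E})$, $\mathcal{V}=\{1,\dots,n\}$, with variable voltage magnitudes $\underline{V}_i\le|V_i|\le\overline{V}_i$ ($0<\underline{V}_i\le\overline{V}_i$), angle limits $\underline{\theta}_{ik}\le 0\le\overline{\theta}_{ik}$ with $|\underline{\theta}_{ik}|,|\overline{\theta}_{ik}|<90^\circ$, and bus power upper bounds $P_i\le\overline{P}_i$ (no lower bounds). Let $\mathcal{P}_\theta=\bigcup_{\underline{\mathbf{v}}\le\tilde{\mathbf{v}}\le\overline{\mathbf{v}}}\mathcal{P}_\theta(\tilde{\mathbf{v}})$, $\mathcal{P}=\mathcal{P}_\theta\cap\mathcal{P}_P$, and $\overline{\mathrm{conv}}(\mathcal{P}_\theta)=\bigcup_{\underline{\mathbf{v}}\le\tilde{\mathbf{v}}\le\overline{\mathbf{v}}}\overline{\mathrm{conv}}(\mathcal{P}_\theta(\tilde{\mathbf{v}}))$. Then $$\mathcal{O}(\mathcal{P})=\mathcal{O}(\mathrm{conv}(\mathcal{P}))=\mathcal{O}(\overline{\mathrm{conv}}(\mathcal{P}_\theta)\cap\mathcal{P}_P).$$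
   Context: Each line $(i,k)$ has admittance $y_{ik}=g_{ik}-jb_{ik}$, $g_{ik},b_{ik}\ge0$. $\underline{\mathbf{v}}=(\underline V_1,\dots,\underline V_n)$, $\overline{\mathbf{v}}=(\overline V_1,\dots,\overline V_n)$. For fixed voltage magnitudes $|V_i|=\tilde V_i$, the flows on line $(i,k)$ with $\theta_{ik}=\theta_i-\theta_k$ are $P_{ik}=\tilde V_i^2 g_{ik}+\tilde V_i\tilde V_k b_{ik}\sin\theta_{ik}-\tilde V_i\tilde V_k g_{ik}\cos\theta_{ik}$, $P_{ki}=\tilde V_k^2 g_{ik}-\tilde V_i\tilde V_k b_{ik}\sin\theta_{ik}-\tilde V_i\tilde V_k g_{ik}\cos\theta_{ik}$; $\mathcal{F}_{\theta_{ik}}(\tilde{\mathbf{v}})$ is the set of such $(P_{ik},P_{ki})$ for $\theta_{ik}\in[\underline{\theta}_{ik},\overline{\theta}_{ik}]$. $\mathbf{A}$ is the $n\times2|\mathcal{E}|$ matrix with $A(i,(k,l))=1$ if $i=k$ and $0$ otherwise (so $(\mathbf{A}\mathbf{f})_i=\sum_{k\sim i}P_{ik}$). $\mathcal{P}_\theta(\tilde{\mathbf{v}})=\mathbf{A}\prod_{(i,k)\in\mathcal{E}}\mathcal{F}_{\theta_{ik}}(\tilde{\mathbf{v}})$ and $\mathcal{P}_P=\{\mathbf{p}:P_i\le\overline{P}_i\ \forall i\}$. For a Hermitian $n\times n$ matrix $\mathbf{W}$, $W_{ik}$ is its $(i,k)$ entry and $\mathbf{W}_{ik}$ its $2\times2$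 submatrix on rows/columns $i,k$. $\mathcal{H}_{ik}(\tilde{\mathbf{v}})$ is the set of Hermitian $\mathbf{W}$ with $\mathbf{W}_{ik}$ positive semidefinite, $W_{ii}=\tilde V_i^2$, $W_{kk}=\tilde V_k^2$, and $\tan(\underline{\theta}_{ik})\mathrm{Re}(W_{ik})\le\mathrm{Im}(W_{ik})\le\tan(\overline{\theta}_{ik})\mathrm{Re}(W_{ik})$. With $\mathbf{Y}_{ik}=\begin{bmatrix}y_{ik}&-y_{ik}\\-y_{ik}&y_{ik}\end{bmatrix}$, $\overline{\mathrm{conv}}(\mathcal{F}_{\theta_{ik}}(\tilde{\mathbf{v}}))=\{\mathrm{Re}(\mathrm{diag}(\mathbf{W}_{ik}\mathbf{Y}_{ik}^H)):\mathbf{W}\in\mathcal{H}_{ik}(\tilde{\mathbf{v}})\}$ and $\overline{\mathrm{conv}}(\mathcal{P}_\theta(\tilde{\mathbf{v}}))=\mathbf{A}\prod_{(i,k)}\overline{\mathrm{conv}}(\mathcal{F}_{\theta_{ik}}(\tilde{\mathbf{v}}))$. $\mathcal{O}(\mathcal{A})$ is the set of Pareto-optimal points of $\mathcal{A}$ (no $y\in\mathcal{A}$ with $y\le x$ componentwise, strict in some coordinate); $\mathrm{conv}$ is the convex hull. *)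

From HB Require Import structures.
From mathcomp Require Import all_boot all_order all_algebra.
From mathcomp Require Import all_classical all_reals all_analysis.
Set Implicit Arguments. Unset Strict Implicit. Unset Printing Implicit Defensive.
Import Order.TTheory GRing.Theory Num.Theory.
Local Open Scope ring_scope.

Section PowerNet.
Variables (R : realType) (n : nat).

(* (V,E) is a tree: a line (i,k) is stored once as an ordered pair;
   no self loops, no line stored in both orientations, |E| = n-1, connected. *)
Definition is_tree (E : {set 'I_n * 'I_n}) : Prop :=
  [/\ (0 < n)%N,
      (forall e, e \in E -> e.1 != e.2),
      (forall i k, (i, k) \in E -> (k, i) \notin E),
      #|E| = n.-1
    & forall i j : 'I_n,
        connect (fun x y : 'I_n => ((x, y) \in E) || ((y, x) \in E)) i j].

Definition Pfw (g b : 'I_n -> 'I_n -> R) (v : 'I_n -> R)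
    (e : 'I_n * 'I_n) (th : R) : R :=
  v e.1 ^+ 2 * g e.1 e.2 + v e.1 * v e.2 * b e.1 e.2 * sin th
  - v e.1 * v e.2 * g e.1 e.2 * cos th.

Definition Pbw (g b : 'I_n -> 'I_n -> R) (v : 'I_n -> R)
    (e : 'I_n * 'I_n) (th : R) : R :=
  v e.2 ^+ 2 * g e.1 e.2 - v e.1 * v e.2 * b e.1 e.2 * sin th
  - v e.1 * v e.2 * g e.1 e.2 * cos th.

(* P_theta(v) = A * prod_{(i,k) in E} F_theta_ik(v):
   p_i = sum of the flows leaving bus i, each line having its own angle
   theta_ik in [thlo_ik, thhi_ik]. *)
Definition Ptheta_v (E : {set 'I_n * 'I_n}) (g b thlo thhi : 'I_n -> 'I_n -> R)
    (v : 'I_n -> R) (p : 'I_n -> R) : Prop :=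
  exists th : 'I_n * 'I_n -> R,
    (forall e, e \in E -> thlo e.1 e.2 <= th e <= thhi e.1 e.2) /\
    forall i : 'I_n,
      p i = \sum_(e in E | e.1 == i) Pfw g b v e (th e)
          + \sum_(e in E | e.2 == i) Pbw g b v e (th e).

Definition in_box (vlo vhi v : 'I_n -> R) : Prop :=
  forall i, vlo i <= v i <= vhi i.

Definition PP (Pbar : 'I_n -> R) (p : 'I_n -> R) : Prop := forall i, p i <= Pbar i.

Definition cvxhull (A : ('I_n -> R) -> Prop) (x : 'I_n -> R) : Prop :=
  exists (k : nat) (lam : 'I_k -> R) (pts : 'I_k -> 'I_n -> R),
    [/\ (forall j, 0 <= lam j), \sum_(j < k) lam j = 1,
        (forall j, A (pts j))
      & forall i, x i = \sum_(j < k) lam j * pts j i].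

Definition clos (A : ('I_n -> R) -> Prop) (x : 'I_n -> R) : Prop :=
  forall eps : R, 0 < eps -> exists y, A y /\ forall i, `|x i - y i| < eps.

Definition ccvxhull (A : ('I_n -> R) -> Prop) : ('I_n -> R) -> Prop := clos (cvxhull A).

Definition pareto (A : ('I_n -> R) -> Prop) (x : 'I_n -> R) : Prop :=
  A x /\ ~ (exists y, A y /\ (forall i, y i <= x i) /\ exists i, y i < x i).

End PowerNet.

(* The proof runs through the semidefinite relaxation of the line flows.  The
   flows on line (i,k) are linear in (u_i, u_k, X, Y) = (V_i^2, V_k^2,
   V_i V_k cos th, V_i V_k sin th); relaxing to X^2 + Y^2 <= u_i u_k (a rotated
   second-order cone) intersected with the angle sector gives a convex set
   containing P.  As only upper power bounds are imposed, every relaxed point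
   is dominated by a point of P: take V = sqrt u and th = asin (Y / (V_i V_k));
   the b-terms then agree and the g-terms can only decrease, because
   X <= V_i V_k cos th and g >= 0.  A set squeezed between P and a set whose
   points are all dominated by points of P has the same Pareto points as P.
   For the closed hull one approximates with V fixed and passes to the limit
   in the compact box of line angles. *)

From HB Require Import structures.
From mathcomp Require Import all_boot all_order all_algebra.
From mathcomp Require Import all_classical all_reals all_analysis.
From mathcomp Require Import ring lra.
Import Order.TTheory GRing.Theory Num.Theory.
Import numFieldNormedType.Exports.
Set Implicit Arguments. Unset Strict Implicit. Unset Printing Implicit Defensive.
Local Open Scope ring_scope.

Section ParetoHull.
Variables (R : realType) (n : nat).
Implicit Types (A B : ('I_n -> R) -> Prop) (p x : 'I_n -> R).

Lemma cvxhull1 A p : A p -> cvxhull A p.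
Proof.
move=> Ap; exists 1%N, (fun=> 1), (fun=> p); split.
- by move=> _; exact: ler01.
- by rewrite big_ord1.
- by [].
- by move=> i; rewrite big_ord1 mul1r.
Qed.

Lemma cvxhull_sub A B : (forall p, A p -> B p) -> forall p, cvxhull A p -> cvxhull B p.
Proof.
move=> AB p [k [lam [pts [lam_ge0 lam_sum1 Apts pE]]]].
by exists k, lam, pts; split=> // j; exact: AB.
Qed.

Lemma convex_cvxhull_sub A :
  (forall p q l, A p -> A q -> 0 <= l <= 1 -> A (fun i => l * p i + (1 - l) * q i)) ->
  forall p, cvxhull A p -> A p.
Proof.
move=> convA p [k [lam [pts [lam_ge0 lam_sum1 Apts pE]]]].
elim: k lam pts lam_ge0 lam_sum1 Apts p pE => [|k IH] lam pts lam_ge0 + Apts p pE.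
  by rewrite big_ord0 => /esym/eqP; rewrite oner_eq0.
rewrite big_ord_recr /=; set L := lam ord_max => sum1.
have rest_ge0 : 0 <= \sum_(j < k) lam (widen_ord (leqnSn k) j) by apply: sumr_ge0 => j _.
have L_ge0 : 0 <= L by exact: lam_ge0.
have [L1|L1] := eqVneq L 1.
  have rest_sum0 : \sum_(j < k) lam (widen_ord (leqnSn k) j) = 0 by lra.
  have rest0 j : lam (widen_ord (leqnSn k) j) = 0.
    by apply: (psumr_eq0P _ rest_sum0) => // i _; exact: lam_ge0.
  have -> : p = pts ord_max.
    apply: funext => i; rewrite pE big_ord_recr /= big1 ?add0r -/L ?L1 ?mul1r //.
    by move=> j _; rewrite rest0 mul0r.
  exact: Apts.
have mu_gt0 : 0 < 1 - L by rewrite subr_gt0 lt_neqAle L1 /=; lra.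
pose q i := \sum_(j < k) (lam (widen_ord (leqnSn k) j) / (1 - L)) * pts (widen_ord (leqnSn k) j) i.
have Aq : A q.
  apply: (IH (fun j => lam (widen_ord (leqnSn k) j) / (1 - L))
             (fun j => pts (widen_ord (leqnSn k) j))).
  - by move=> j; apply: divr_ge0; [exact: lam_ge0 | exact: ltW].
  - rewrite -mulr_suml (_ : \sum_(j < k) lam (widen_ord (leqnSn k) j) = 1 - L).
      by rewrite divff ?gt_eqF.
    lra.
  - by move=> j; exact: Apts.
  - by [].
have -> : p = (fun i => L * pts ord_max i + (1 - L) * q i).
  apply: funext => i; rewrite pE big_ord_recr /= addrC mulr_sumr; congr (_ + _).
  by apply: eq_bigr => j _; rewrite mulrA [_ * (_ / _)]mulrC divfK ?gt_eqF.
by apply: convA => //; lra.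
Qed.

Lemma pareto_dominated_eq A B x :
  (forall p, A p -> B p) -> (forall p, B p -> exists a, A a /\ forall i, a i <= p i) ->
  pareto A x <-> pareto B x.
Proof.
move=> AB Bdom; split.
- move=> [Ax noA]; split; first exact: AB.
  move=> [y [By [yx [i yi]]]]; have [a [Aa ay]] := Bdom y By.
  apply: noA; exists a; split=> //; split.
    by move=> j; exact: le_trans (ay j) (yx j).
  by exists i; exact: le_lt_trans (ay i) yi.
- move=> [Bx noB]; have [a [Aa ax]] := Bdom x Bx.
  have xa : x = a.
    apply: funext => i; apply/eqP; rewrite eq_le ax andbT leNgt; apply/negP => ai.
    by apply: noB; exists a; split; [exact: AB | split => //; exists i].
  rewrite xa; split => // -[y [Ay yx]]; apply: noB; exists y.
  by rewrite xa; split => //; exact: AB.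
Qed.

End ParetoHull.

Lemma rotated_cone_conic (R : realFieldType) (X1 Y1 a1 b1 X2 Y2 a2 b2 l m : R) :
  X1 ^+ 2 + Y1 ^+ 2 <= a1 * b1 -> X2 ^+ 2 + Y2 ^+ 2 <= a2 * b2 ->
  0 <= a1 -> 0 <= b1 -> 0 <= a2 -> 0 <= b2 -> 0 <= l -> 0 <= m ->
  (l * X1 + m * X2) ^+ 2 + (l * Y1 + m * Y2) ^+ 2
    <= (l * a1 + m * a2) * (l * b1 + m * b2).
Proof.
move=> cone1 cone2 a1_ge0 b1_ge0 a2_ge0 b2_ge0 l_ge0 m_ge0.
have cauchy_schwarz : (X1 * X2 + Y1 * Y2) ^+ 2 <= (X1 ^+ 2 + Y1 ^+ 2) * (X2 ^+ 2 + Y2 ^+ 2).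
  have := sqr_ge0 (X1 * Y2 - X2 * Y1); nra.
have am_gm : 4 * ((a1 * b1) * (a2 * b2)) <= (a1 * b2 + a2 * b1) ^+ 2.
  have := sqr_ge0 (a1 * b2 - a2 * b1); nra.
have cross : 2 * (X1 * X2 + Y1 * Y2) <= a1 * b2 + a2 * b1.
  apply: le_trans (ler_norm _) _.
  rewrite -ler_sqr ?nnegrE ?normr_ge0 ?addr_ge0 ?mulr_ge0 // real_normK ?num_real //.
  have : (X1 ^+ 2 + Y1 ^+ 2) * (X2 ^+ 2 + Y2 ^+ 2) <= (a1 * b1) * (a2 * b2).
    by apply: ler_pM => //; apply: addr_ge0; exact: sqr_ge0.
  nra.
have := mulr_ge0 l_ge0 m_ge0; nra.
Qed.

Lemma halfdisk_above_ray (R : realFieldType) (X Y r c s : R) :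
  0 <= X -> X ^+ 2 + Y ^+ 2 <= r ^+ 2 -> 0 <= r ->
  0 < c -> s <= 0 -> c ^+ 2 + s ^+ 2 = 1 -> X * s <= Y * c -> r * s <= Y.
Proof.
move=> X_ge0 disk r_ge0 c_gt0 s_le0 cs1 above; rewrite leNgt; apply/negP => Y_lt.
have rs_le0 : r * s <= 0 by rewrite mulr_ge0_le0.
have Y2_gt : (r * s) ^+ 2 < Y ^+ 2.
  by rewrite -(sqrrN Y) -(sqrrN (r * s)) ltr_sqr ?nnegrE ?oppr_ge0 ?ltrN2 //; lra.
have rc2 : (r * c) ^+ 2 = r ^+ 2 - (r * s) ^+ 2.
  by rewrite !exprMn (_ : c ^+ 2 = 1 - s ^+ 2); [ring | lra].
have X_lt : X < r * c.
  by rewrite -ltr_sqr ?nnegrE ?mulr_ge0 ?(ltW c_gt0) //; lra.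
have : Y * c < r * s * c by rewrite ltr_pM2r.
have := ler_wnM2r s_le0 (ltW X_lt); nra.
Qed.

Definition sector (R : realType) (lo hi X Y : R) : Prop :=
  [/\ 0 <= X, X * sin lo <= Y * cos lo & Y * cos hi <= X * sin hi].

Lemma sector_conic (R : realType) (lo hi X1 Y1 X2 Y2 l m : R) :
  sector lo hi X1 Y1 -> sector lo hi X2 Y2 -> 0 <= l -> 0 <= m ->
  sector lo hi (l * X1 + m * X2) (l * Y1 + m * Y2).
Proof.
move=> [X1_ge0 lo1 hi1] [X2_ge0 lo2 hi2] l_ge0 m_ge0; split.
- by rewrite addr_ge0 ?mulr_ge0.
- by have := ler_wpM2l l_ge0 lo1; have := ler_wpM2l m_ge0 lo2; nra.
- by have := ler_wpM2l l_ge0 hi1; have := ler_wpM2l m_ge0 hi2; nra.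
Qed.

Lemma polar_sector (R : realType) (lo hi r t : R) :
  - (pi / 2) < lo -> hi < pi / 2 -> 0 <= r -> lo <= t <= hi ->
  sector lo hi (r * cos t) (r * sin t).
Proof.
move=> lo_gt hi_lt r_ge0 /andP[lo_t t_hi]; have pi_pos := @pi_gt0 R; split.
- by apply: mulr_ge0 => //; apply: cos_ge0_pihalf; apply/andP; split; lra.
- have : 0 <= sin (t - lo) by apply: sin_ge0_pi; apply/andP; split; lra.
  by rewrite sinB => /(mulr_ge0 r_ge0); nra.
- have : 0 <= sin (hi - t) by apply: sin_ge0_pi; apply/andP; split; lra.
  by rewrite sinB => /(mulr_ge0 r_ge0); nra.
Qed.

Lemma sector_asin (R : realType) (lo hi r X Y : R) :
  - (pi / 2) < lo -> lo <= 0 -> 0 <= hi -> hi < pi / 2 ->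
  0 < r -> X ^+ 2 + Y ^+ 2 <= r ^+ 2 -> sector lo hi X Y ->
  [/\ lo <= asin (Y / r) <= hi, r * sin (asin (Y / r)) = Y
    & X <= r * cos (asin (Y / r))].
Proof.
move=> lo_gt lo_le0 hi_ge0 hi_lt r_gt0 disk [X_ge0 above below].
have pi_pos := @pi_gt0 R.
have cos_lo_gt0 : 0 < cos lo by apply: cos_gt0_pihalf; apply/andP; split; lra.
have cos_hi_gt0 : 0 < cos hi by apply: cos_gt0_pihalf; apply/andP; split; lra.
have sin_lo_le0 : sin lo <= 0.
  have : 0 <= sin (- lo) by apply: sin_ge0_pi; apply/andP; split; lra.
  by rewrite sinN oppr_ge0.
have sin_hi_ge0 : 0 <= sin hi by apply: sin_ge0_pi; apply/andP; split; lra.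
have Y_ge : r * sin lo <= Y.
  by apply: (halfdisk_above_ray X_ge0 disk (ltW r_gt0) cos_lo_gt0); rewrite ?cos2Dsin2.
have Y_le : Y <= r * sin hi.
  suff : r * - sin hi <= - Y by lra.
  apply: (halfdisk_above_ray X_ge0 _ (ltW r_gt0) cos_hi_gt0); rewrite ?sqrrN ?cos2Dsin2 //.
  - by rewrite oppr_le0.
  - lra.
set s := Y / r.
have rs : r * s = Y by rewrite /s mulrC divfK ?gt_eqF.
have lo_s : sin lo <= s by rewrite -(ler_pM2l r_gt0) rs.
have s_hi : s <= sin hi by rewrite -(ler_pM2l r_gt0) rs.
have s_bnd : -1 <= s <= 1.
  by apply/andP; split; [apply: le_trans (sin_geN1 _) lo_s | apply: le_trans s_hi (sin_le1 _)].
have sin_t : sin (asin s) = s by rewrite asinK // in_itv.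
have t_itv : asin s \in `[- (pi / 2), pi / 2] by rewrite in_itv /= asin_geNpi2 ?asin_lepi2.
have lo_itv : lo \in `[- (pi / 2), pi / 2] by rewrite in_itv /=; apply/andP; split; lra.
have hi_itv : hi \in `[- (pi / 2), pi / 2] by rewrite in_itv /=; apply/andP; split; lra.
split.
- apply/andP; split; rewrite leNgt; apply/negP.
  + by rewrite -(ltr_sin t_itv lo_itv) sin_t => ?; lra.
  + by rewrite -(ltr_sin hi_itv t_itv) sin_t => ?; lra.
- by rewrite sin_t.
- rewrite cos_asin // -ler_sqr ?nnegrE ?mulr_ge0 ?sqrtr_ge0 ?(ltW r_gt0) //.
  have one_s2 : 0 <= 1 - s ^+ 2 by nra.
  rewrite exprMn sqr_sqrtr //.
  have -> : r ^+ 2 * (1 - s ^+ 2) = r ^+ 2 - Y ^+ 2 by rewrite -rs; ring.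
  lra.
Qed.

Section PowerNetwork.
Variables (R : realType) (n : nat) (E : {set 'I_n * 'I_n})
  (g b thlo thhi : 'I_n -> 'I_n -> R) (vlo vhi Pbar : 'I_n -> R).
Hypothesis gb_ge0 : forall e, e \in E -> 0 <= g e.1 e.2 /\ 0 <= b e.1 e.2.
Hypothesis th_bnd : forall e, e \in E ->
  [/\ thlo e.1 e.2 <= 0, 0 <= thhi e.1 e.2,
      - (pi / 2) < thlo e.1 e.2 & thhi e.1 e.2 < pi / 2].
Hypothesis vlo_gt0 : forall i, 0 < vlo i /\ vlo i <= vhi i.

Definition angles_ok (th : 'I_n * 'I_n -> R) : Prop :=
  forall e, e \in E -> thlo e.1 e.2 <= th e <= thhi e.1 e.2.

Definition line_flow (v : 'I_n -> R) (th : 'I_n * 'I_n -> R) (i : 'I_n) : R :=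
  \sum_(e in E | e.1 == i) Pfw g b v e (th e)
  + \sum_(e in E | e.2 == i) Pbw g b v e (th e).

Definition Ptheta (p : 'I_n -> R) : Prop :=
  exists v, in_box vlo vhi v /\ Ptheta_v E g b thlo thhi v p.

Definition Pset (p : 'I_n -> R) : Prop := Ptheta p /\ PP Pbar p.

Definition Pcconv (p : 'I_n -> R) : Prop :=
  (exists v, in_box vlo vhi v /\ ccvxhull (Ptheta_v E g b thlo thhi v) p) /\ PP Pbar p.

(* (u, X, Y) stand for (W_ii, Re W_ik, Im W_ik), so that (rPfw, rPbw) is
   Re (diag (W_ik Y_ik^H)).  The sector also asks Re W_ik >= 0, which only
   shrinks the relaxation; all that is used is that it contains P and that
   its points are dominated by points of P. *)
Definition rPfw (u : 'I_n -> R) (e : 'I_n * 'I_n) (X Y : R) : R :=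
  u e.1 * g e.1 e.2 + b e.1 e.2 * Y - g e.1 e.2 * X.

Definition rPbw (u : 'I_n -> R) (e : 'I_n * 'I_n) (X Y : R) : R :=
  u e.2 * g e.1 e.2 - b e.1 e.2 * Y - g e.1 e.2 * X.

Definition relaxed_flow (u : 'I_n -> R) (X Y : 'I_n * 'I_n -> R) (i : 'I_n) : R :=
  \sum_(e in E | e.1 == i) rPfw u e (X e) (Y e)
  + \sum_(e in E | e.2 == i) rPbw u e (X e) (Y e).

Definition psd_lines (u : 'I_n -> R) (X Y : 'I_n * 'I_n -> R) : Prop :=
  forall e, e \in E -> sector (thlo e.1 e.2) (thhi e.1 e.2) (X e) (Y e)
                       /\ X e ^+ 2 + Y e ^+ 2 <= u e.1 * u e.2.

Definition relaxed (u p : 'I_n -> R) : Prop :=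
  exists X Y, psd_lines u X Y /\ forall i, relaxed_flow u X Y i <= p i.

Definition sq_box (u : 'I_n -> R) : Prop := forall i, vlo i ^+ 2 <= u i <= vhi i ^+ 2.

Definition Prelax (p : 'I_n -> R) : Prop := (exists u, sq_box u /\ relaxed u p) /\ PP Pbar p.

Lemma in_box_gt0 v i : in_box vlo vhi v -> 0 < v i.
Proof.
move=> vb; have [lo_gt0 _] := vlo_gt0 i; have /andP[lo_v _] := vb i.
exact: lt_le_trans lo_v.
Qed.

Lemma sq_box_sqr v : in_box vlo vhi v -> sq_box (fun i => v i ^+ 2).
Proof.
move=> vb i; have /andP[lo_v v_hi] := vb i; have [lo_gt0 _] := vlo_gt0 i.
by apply/andP; split; nra.
Qed.

Lemma sq_box_ge0 u i : sq_box u -> 0 <= u i.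
Proof. by move=> ub; have /andP[lo_u _] := ub i; exact: le_trans (sqr_ge0 _) lo_u. Qed.

Lemma sq_box_sqrt u : sq_box u -> exists2 v, in_box vlo vhi v & u = (fun i => v i ^+ 2).
Proof.
move=> ub; have u_ge0 i : 0 <= u i by exact: sq_box_ge0.
exists (fun i => Num.sqrt (u i)); last by apply: funext => i; rewrite sqr_sqrtr.
move=> i; have /andP[lo_u u_hi] := ub i; have [lo_gt0 lo_hi] := vlo_gt0 i.
have hi_ge0 : 0 <= vhi i by lra.
apply/andP; split; rewrite -ler_sqr ?nnegrE ?sqrtr_ge0 ?sqr_sqrtr //; exact: ltW.
Qed.

Lemma sq_box_convex u1 u2 l : sq_box u1 -> sq_box u2 -> 0 <= l <= 1 ->
  sq_box (fun i => l * u1 i + (1 - l) * u2 i).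
Proof.
move=> ub1 ub2 /andP[l_ge0 l_le1] i.
have /andP[lo1 hi1] := ub1 i; have /andP[lo2 hi2] := ub2 i.
by apply/andP; split; nra.
Qed.

Lemma Ptheta_v_relaxed v p : in_box vlo vhi v -> Ptheta_v E g b thlo thhi v p ->
  relaxed (fun i => v i ^+ 2) p.
Proof.
move=> vb [th [th_ok pE]].
exists (fun e => v e.1 * v e.2 * cos (th e)), (fun e => v e.1 * v e.2 * sin (th e)).
split=> [e eE|i].
  have [_ _ lo_gt hi_lt] := th_bnd eE; split.
    by apply: polar_sector => //; [rewrite mulr_ge0 ?ltW ?in_box_gt0 | exact: th_ok].
  have -> : (v e.1 * v e.2 * cos (th e)) ^+ 2 + (v e.1 * v e.2 * sin (th e)) ^+ 2
      = v e.1 ^+ 2 * v e.2 ^+ 2 * (cos (th e) ^+ 2 + sin (th e) ^+ 2) by ring.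
  by rewrite cos2Dsin2 mulr1.
suff -> : relaxed_flow (fun i => v i ^+ 2) (fun e => v e.1 * v e.2 * cos (th e))
    (fun e => v e.1 * v e.2 * sin (th e)) i = p i by [].
by rewrite pE; congr (_ + _); apply: eq_bigr => e _; rewrite /rPfw /Pfw /rPbw /Pbw; ring.
Qed.

Lemma relaxed_dominated v p : in_box vlo vhi v -> relaxed (fun i => v i ^+ 2) p ->
  exists2 th, angles_ok th & forall i, line_flow v th i <= p i.
Proof.
move=> vb [X [Y [psd le_p]]].
pose t e := asin (Y e / (v e.1 * v e.2)).
have line e : e \in E -> [/\ thlo e.1 e.2 <= t e <= thhi e.1 e.2,
    v e.1 * v e.2 * sin (t e) = Y e & X e <= v e.1 * v e.2 * cos (t e)].
  move=> eE; have [lo_le0 hi_ge0 lo_gt hi_lt] := th_bnd eE; have [sec disk] := psd e eE.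
  by apply: sector_asin; rewrite ?mulr_gt0 ?in_box_gt0 ?exprMn.
exists t => [e eE | i]; first by have [] := line e eE.
apply: le_trans (le_p i); apply: lerD; apply: ler_sum => e /andP[eE _];
  have [_ rsin rcos] := line e eE; have [g_ge0 _] := gb_ge0 eE;
  have := ler_wpM2l g_ge0 rcos; have := congr1 (fun z => b e.1 e.2 * z) rsin;
  rewrite /Pfw /rPfw /Pbw /rPbw /=; nra.
Qed.

Lemma relaxed_flow_conic u1 u2 X1 Y1 X2 Y2 l m i :
  relaxed_flow (fun i => l * u1 i + m * u2 i) (fun e => l * X1 e + m * X2 e)
    (fun e => l * Y1 e + m * Y2 e) i
  = l * relaxed_flow u1 X1 Y1 i + m * relaxed_flow u2 X2 Y2 i.
Proof.
rewrite /relaxed_flow !mulrDr addrACA !mulr_sumr -!big_split /=.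
by congr (_ + _); apply: eq_bigr => e _; rewrite /rPfw /rPbw /=; ring.
Qed.

Lemma relaxed_convex u1 u2 p1 p2 l :
  (forall i, 0 <= u1 i) -> (forall i, 0 <= u2 i) ->
  relaxed u1 p1 -> relaxed u2 p2 -> 0 <= l <= 1 ->
  relaxed (fun i => l * u1 i + (1 - l) * u2 i) (fun i => l * p1 i + (1 - l) * p2 i).
Proof.
move=> u1_ge0 u2_ge0 [X1 [Y1 [psd1 le1]]] [X2 [Y2 [psd2 le2]]] /andP[l_ge0 l_le1].
have m_ge0 : 0 <= 1 - l by lra.
exists (fun e => l * X1 e + (1 - l) * X2 e), (fun e => l * Y1 e + (1 - l) * Y2 e).
split=> [e eE|i].
  have [sec1 disk1] := psd1 e eE; have [sec2 disk2] := psd2 e eE.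
  by split; [exact: sector_conic | exact: rotated_cone_conic].
rewrite relaxed_flow_conic.
have := ler_wpM2l l_ge0 (le1 i); have := ler_wpM2l m_ge0 (le2 i).
lra.
Qed.

(* Naming R as a topological space keeps unification in the product topology
   cheap. *)
Definition Rtop : topologicalType := R.
Definition angle_space := prod_topology (fun _ : 'I_n * 'I_n => Rtop).

Lemma coord_continuous (h : R -> R) e :
  continuous h -> continuous (fun th : angle_space => h (th e)).
Proof.
move=> h_cont th; apply: (@continuous_comp angle_space Rtop Rtop (fun th => th e) h).
  exact: (@proj_continuous _ (fun=> Rtop) e).
exact: h_cont.
Qed.

Lemma Pfw_continuous v e : continuous (Pfw g b v e).
Proof.
move=> t; apply: cvgB; first apply: cvgD; first exact: cvg_cst.
  by apply: cvgMl_tmp; exact: continuous_sin.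
by apply: cvgMl_tmp; exact: continuous_cos.
Qed.

Lemma Pbw_continuous v e : continuous (Pbw g b v e).
Proof.
move=> t; apply: cvgB; first apply: cvgB; first exact: cvg_cst.
  by apply: cvgMl_tmp; exact: continuous_sin.
by apply: cvgMl_tmp; exact: continuous_cos.
Qed.

Lemma line_flow_continuous v i :
  continuous (fun th : angle_space => line_flow v th i).
Proof.
have sum_cont (P : pred ('I_n * 'I_n)) (F : 'I_n * 'I_n -> R -> R) :
    (forall e, continuous (F e)) ->
    continuous (fun th : angle_space => \sum_(e | P e) F e (th e)).
  move=> F_cont; exact: (@continuous_big Rtop _ +%R 0 P add_continuous angle_space
    (index_enum _) (fun e th => F e (th e)) (fun e _ => coord_continuous (F_cont e))).
move=> th; exact: (cvgD (sum_cont _ _ (@Pfw_continuous v) th)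
                        (sum_cont _ _ (@Pbw_continuous v) th)).
Qed.

Lemma line_flow_attain v p :
  (forall eps, 0 < eps ->
     exists2 th, angles_ok th & forall i, line_flow v th i <= p i + eps) ->
  exists2 th, angles_ok th & forall i, line_flow v th i <= p i.
Proof.
move=> approx.
pose lo e := if e \in E then thlo e.1 e.2 else 0.
pose hi e := if e \in E then thhi e.1 e.2 else 0.
pose K : set angle_space := [set th | forall e, `[lo e, hi e] (th e)]%classic.
have K_compact : compact K.
  exact: (@tychonoff _ (fun=> Rtop) (fun e => `[lo e, hi e]%classic)
            (fun e => @segment_compact R (lo e) (hi e))).
(* Angles of non-lines are irrelevant; pinning them to 0 makes the box compact. *)
pose cut (th : 'I_n * 'I_n -> R) : angle_space := fun e => if e \in E then th e else 0.
have cutK th : angles_ok th -> K (cut th).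
  move=> th_ok e; rewrite /= in_itv /= /cut /lo /hi.
  by case: ifP => eE; [exact: th_ok | rewrite lexx].
have line_flow_cut th i : line_flow v (cut th) i = line_flow v th i.
  by rewrite /line_flow /cut; congr (_ + _); apply: eq_bigr => e /andP[-> _].
(* A cluster point of the sets of eps-approximate solutions solves exactly. *)
pose S eps := [set th : angle_space | K th /\ forall i, line_flow v th i <= p i + eps]%classic.
pose F := filter_from [set eps : R | 0 < eps]%classic S.
have F_proper : ProperFilter F.
  apply: filter_from_proper => [|eps eps_gt0].
    apply: filter_from_filter => [|e1 e2 e1_gt0 e2_gt0]; first by exists 1; exact: ltr01.
    exists (Num.min e1 e2); first by rewrite /= lt_min e1_gt0.
    move=> th [Kth le_th]; split; split=> // i; apply: le_trans (le_th i) _;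
      by rewrite lerD2l ge_min lexx ?orbT.
  have [th th_ok le_th] := approx eps eps_gt0.
  by exists (cut th); split=> [|i]; [exact: cutK | rewrite line_flow_cut].
have [th [Kth th_cluster]] : (K `&` cluster F !=set0)%classic.
  by apply: K_compact; exists 1 => [|th []] //; exact: ltr01.
exists th => [e eE | i]; first by have := Kth e; rewrite /= in_itv /= /lo /hi eE.
apply/ler_addgt0Pr => eps eps_gt0; rewrite leNgt; apply/negP => lt_eps.
have near_th : \forall th' \near th, p i + eps < line_flow v th' i.
  by apply: (cvgr_gt _ (@line_flow_continuous v i th) _ lt_eps).
have [th' [[_ le_th'] gt_th']] := th_cluster (S eps) _ (in_filter_from S eps_gt0) near_th.
by have := lt_le_trans gt_th' (le_th' i); rewrite ltxx.
Qed.

Lemma Ptheta_line_flow v th : in_box vlo vhi v -> angles_ok th -> Ptheta (line_flow v th).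
Proof. by move=> vb th_ok; exists v; split=> //; exists th. Qed.

Lemma Pset_Prelax p : Pset p -> Prelax p.
Proof.
move=> [[v [vb p_v]] p_le]; split=> //.
by exists (fun i => v i ^+ 2); split; [exact: sq_box_sqr | exact: Ptheta_v_relaxed].
Qed.

Lemma Prelax_dominated p : Prelax p -> exists a, Pset a /\ forall i, a i <= p i.
Proof.
move=> [[u [ub rel]] p_le]; have [v vb u_eq] := sq_box_sqrt ub.
rewrite u_eq in rel; have [th th_ok le_p] := relaxed_dominated vb rel.
exists (line_flow v th); split=> //; split; first exact: Ptheta_line_flow.
by move=> i; exact: le_trans (le_p i) (p_le i).
Qed.

Lemma cvxhull_Pset_Prelax p : cvxhull Pset p -> Prelax p.
Proof.
move=> /(cvxhull_sub (@Pset_Prelax)); apply: convex_cvxhull_sub.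
move=> p1 p2 l [[u1 [ub1 rel1]] le1] [[u2 [ub2 rel2]] le2] l_bnd; split.
  exists (fun i => l * u1 i + (1 - l) * u2 i); split; first exact: sq_box_convex.
  by apply: relaxed_convex => // i; exact: sq_box_ge0.
by move=> i; case/andP: l_bnd => l_ge0 l_le1; have := le1 i; have := le2 i; nra.
Qed.

Lemma cvxhull_Ptheta_v_relaxed v p : in_box vlo vhi v ->
  cvxhull (Ptheta_v E g b thlo thhi v) p -> relaxed (fun i => v i ^+ 2) p.
Proof.
move=> vb /(cvxhull_sub (fun q => @Ptheta_v_relaxed v q vb)); apply: convex_cvxhull_sub.
move=> p1 p2 l rel1 rel2 l_bnd.
have -> : (fun i => v i ^+ 2) = (fun i => l * v i ^+ 2 + (1 - l) * v i ^+ 2).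
  by apply: funext => i; ring.
by apply: relaxed_convex => // i; exact: sqr_ge0.
Qed.

Lemma Pset_Pcconv p : Pset p -> Pcconv p.
Proof.
move=> [[v [vb p_v]] p_le]; split=> //; exists v; split=> // eps eps_gt0.
by exists p; split=> [|i]; [exact: cvxhull1 | rewrite subrr normr0].
Qed.

Lemma Pcconv_dominated p : Pcconv p -> exists a, Pset a /\ forall i, a i <= p i.
Proof.
move=> [[v [vb p_cl]] p_le].
have [th th_ok le_p] : exists2 th, angles_ok th & forall i, line_flow v th i <= p i.
  apply: line_flow_attain => eps eps_gt0.
  have [z [z_hull z_near]] := p_cl eps eps_gt0.
  have [th th_ok le_z] := relaxed_dominated vb (cvxhull_Ptheta_v_relaxed vb z_hull).
  exists th => // i; have := z_near i; rewrite ltr_norml => /andP[z_gt _].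
  by have := le_z i; lra.
exists (line_flow v th); split=> //; split; first exact: Ptheta_line_flow.
by move=> i; exact: le_trans (le_p i) (p_le i).
Qed.

Lemma pareto_Pset_cvxhull x : pareto Pset x <-> pareto (cvxhull Pset) x.
Proof.
apply: pareto_dominated_eq => p; first exact: cvxhull1.
by move/cvxhull_Pset_Prelax; exact: Prelax_dominated.
Qed.

Lemma pareto_Pset_Pcconv x : pareto Pset x <-> pareto Pcconv x.
Proof. exact: pareto_dominated_eq (@Pset_Pcconv) (@Pcconv_dominated). Qed.

End PowerNetwork.

Theorem theorem3 (R : realType) (n : nat) (E : {set 'I_n * 'I_n})
    (g b thlo thhi : 'I_n -> 'I_n -> R) (vlo vhi Pbar : 'I_n -> R) :
  is_tree E ->
  (forall e, e \in E -> 0 <= g e.1 e.2 /\ 0 <= b e.1 e.2) ->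
  (forall e, e \in E ->
     [/\ thlo e.1 e.2 <= 0, 0 <= thhi e.1 e.2,
         - (pi / 2) < thlo e.1 e.2 & thhi e.1 e.2 < pi / 2]) ->
  (forall i, 0 < vlo i /\ vlo i <= vhi i) ->
  let Ptheta := fun p => exists v, in_box vlo vhi v /\ Ptheta_v E g b thlo thhi v p in
  let Pset := fun p => Ptheta p /\ PP Pbar p in
  let cconvPtheta := fun p => exists v, in_box vlo vhi v /\
                                ccvxhull (Ptheta_v E g b thlo thhi v) p in
  forall x : 'I_n -> R,
    (pareto Pset x <-> pareto (cvxhull Pset) x) /\
    (pareto (cvxhull Pset) x <-> pareto (fun p => cconvPtheta p /\ PP Pbar p) x).
Proof.
(* Each line carries its own angle in [Ptheta_v], which is what the tree
   structure makes possible. *)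
move=> _ gb_ge0 th_bnd vlo_gt0 Ptheta Pset cconvPtheta x.
have hull := pareto_Pset_cvxhull Pbar gb_ge0 th_bnd vlo_gt0 x.
have cconv := pareto_Pset_Pcconv Pbar gb_ge0 th_bnd vlo_gt0 x.
by split=> //; split=> [/hull/cconv | /cconv/hull].
Qed.
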